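(* For every $\epsilon\in(\tfrac12,1)$ there exists a forecasting competition (as defined in the context), with some number of events $m$ and some number of forecasters $n$, such that $p_0=\frac{2-\epsilon}{n}$ and the competition has no pure Nash equilibrium.
   Context: A forecasting competition with $m$ binary events and $n$ forecasters is the following game. Let $\mathcal{Y}=\{0,1\}^m$, $\mathcal{X}=[0,1]^m$, $Q$ a probability distribution on $\mathcal{Y}$, and $d(x,y)=\|x-y\|_2$. Each forecaster $i\in[n]$ chooses $x_i\in\mathcal{X}$; write $\bm{x}=(x_1,\dots,x_n)$ and $X_{\min}(\bm{x},y)=\arg\min_{x_j\in\bm{x}}\|x_j-y\|_2$. Forecaster $i$'s utility is $u_i(x_i,\bm{x}_{-i})=\mathbb{E}_{y\sim Q}\big[\mathbb{1}[x_i\in X_{\min}(\bm{x},y)]/|X_{\min}(\bm{x},y)|\big]$. Let $p_0=\min_{y\in\{0,1\}^m}Q(y)$. A pure Nash equilibrium is $\bm{x}$ with $u_i(x_i',\bm{x}_{-i})\le u_i(x_i,\bm{x}_{-i})$ for all $i$ and $x_i'\in\mathcal{X}$. *)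

From HB Require Import structures.
From mathcomp Require Import all_boot all_order all_algebra.
From mathcomp Require Import reals.
Set Implicit Arguments. Unset Strict Implicit. Unset Printing Implicit Defensive.
Import Order.TTheory GRing.Theory Num.Theory.
Local Open Scope ring_scope.

Section Forecast.
Variable R : realType.

Definition outcome (m : nat) := {ffun 'I_m -> bool}.

Definition in_cube (m : nat) (x : 'I_m -> R) : Prop :=
  forall k, 0 <= x k <= 1.

Definition is_distr (m : nat) (Q : outcome m -> R) : Prop :=
  (forall y, 0 <= Q y) /\ \sum_(y : outcome m) Q y = 1.

Definition dist (m : nat) (x : 'I_m -> R) (y : outcome m) : R :=
  Num.sqrt (\sum_(k < m) (x k - (y k)%:R) ^+ 2).

Definition Xmin (m n : nat) (x : 'I_n -> 'I_m -> R) (y : outcome m) : {set 'I_n} :=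
  [set j : 'I_n | [forall k : 'I_n, dist (x j) y <= dist (x k) y]].

Definition utility (m n : nat) (Q : outcome m -> R) (x : 'I_n -> 'I_m -> R)
  (i : 'I_n) : R :=
  \sum_(y : outcome m) Q y * ((i \in Xmin x y)%:R / (#|Xmin x y|)%:R).

Definition deviate (m n : nat) (x : 'I_n -> 'I_m -> R) (i : 'I_n) (x' : 'I_m -> R)
  : 'I_n -> 'I_m -> R :=
  fun j => if j == i then x' else x j.

Definition pure_NE (m n : nat) (Q : outcome m -> R) (x : 'I_n -> 'I_m -> R) : Prop :=
  (forall j, in_cube (x j)) /\
  forall (i : 'I_n) (x' : 'I_m -> R), in_cube x' ->
    utility Q (deviate x i x') i <= utility Q x i.

Definition p0 (m : nat) (Q : outcome m -> R) : R :=
  \big[Num.min/Q [ffun => false]]_(y : outcome m) Q y.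

End Forecast.

From HB Require Import structures.
From mathcomp Require Import all_boot all_order all_algebra.
From mathcomp Require Import reals.
From mathcomp Require Import ring lra zify.
Import Order.TTheory GRing.Theory Num.Theory.
Local Open Scope ring_scope.
Set Implicit Arguments. Unset Strict Implicit. Unset Printing Implicit Defensive.

(* Take two events and let the outcome (1,1) carry almost all the mass, while every
   outcome has probability above 1/n.  In an equilibrium some forecaster earns at most
   1/n, so every corner y of {0,1}^2 is forecast exactly by someone else (otherwise
   that forecaster would move to y and earn Q y).  Hence every forecaster sits on a
   corner and earns Q y / #(forecasters at y), while moving to another corner y' would
   earn at least Q y' / (#(forecasters at y') + 1).  Compared with the heavy corner this
   leaves a single forecaster on each light corner; but then the one at (0,0) gains by
   moving to (0,1): it shares (0,1) with one forecaster and still ties for (0,0) with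
   those at (0,1) and (1,0), earning Q(0,1)/2 + Q(0,0)/3 > Q(0,0). *)

Lemma ler_pdivn2l (R : realType) (v : R) (s t : nat) :
  0 <= v -> (0 < s)%N -> (s <= t)%N -> v / t%:R <= v / s%:R.
Proof.
move=> v_ge0 s_gt0 le_st.
by rewrite ler_wpM2l // lef_pV2 ?posrE ?ltr0n ?ler_nat // (leq_trans s_gt0).
Qed.

Lemma p0_eq_min (R : realType) (m : nat) (Q : outcome m -> R) y0 :
  (forall y, Q y0 <= Q y) -> p0 Q = Q y0.
Proof.
move=> y0_min; apply/eqP; rewrite /p0 eq_le bigmin_le /=.
by apply: le_bigmin => *; apply: y0_min.
Qed.

Section Corners.
Variables (R : realType) (m : nat).
Implicit Types (y : outcome m) (z : 'I_m -> R).

Definition sqdist z y : R := \sum_(k < m) (z k - (y k)%:R) ^+ 2.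

Definition corner y : 'I_m -> R := fun k => (y k)%:R.

Definition hamming (y y' : outcome m) : nat := \sum_(k < m) (y k != y' k).

Lemma sqdist_ge0 z y : 0 <= sqdist z y.
Proof. by apply: sumr_ge0 => k _; apply: sqr_ge0. Qed.

Lemma dist_le z z' y : (dist z y <= dist z' y) = (sqdist z y <= sqdist z' y).
Proof. by rewrite /dist ler_sqrt // sqdist_ge0. Qed.

Lemma sqdist_eq0P z y : reflect (forall k, z k = (y k)%:R) (sqdist z y == 0).
Proof.
apply: (iffP idP) => [/eqP z0 k|zy].
  have /(_ k isT)/eqP := psumr_eq0P (fun k _ => sqr_ge0 (z k - (y k)%:R)) z0.
  by rewrite sqrf_eq0 subr_eq0 => /eqP.
by rewrite /sqdist big1 // => k _; rewrite zy subrr expr0n.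
Qed.

Lemma sqdist_corner y y' : sqdist (corner y) y' = (hamming y y')%:R.
Proof.
rewrite /sqdist /hamming natr_sum; apply: eq_bigr => k _; rewrite /corner.
by case: (y k); case: (y' k); rewrite /= ?subrr ?expr0n ?subr0 ?sub0r ?sqrrN ?expr1n.
Qed.

Lemma hamming_eq0 y y' : (hamming y y' == 0)%N = (y == y').
Proof.
rewrite sum_nat_eq0; apply/forallP/eqP => [same|-> k]; last by rewrite eqxx.
by apply/ffunP => k; have := same k; rewrite /= eqn0Ngt lt0b negbK => /eqP.
Qed.

Lemma hammingxx y : hamming y y = 0%N.
Proof. by apply/eqP; rewrite hamming_eq0. Qed.

Lemma in_cube_corner y : in_cube (corner y).
Proof. by move=> k; rewrite /corner; case: (y k); rewrite ?lexx ?ler01. Qed.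

End Corners.

Arguments corner {R m} y.
Arguments in_cube_corner {R m} y.

Section Occupancy.
Variables (R : realType) (m n : nat) (x : 'I_n -> 'I_m -> R).
Implicit Types (y : outcome m).

Definition at_corner y : {set 'I_n} := [set j | sqdist (x j) y == 0].

Lemma sqdist_at_corner j y y' :
  j \in at_corner y -> sqdist (x j) y' = (hamming y y')%:R.
Proof.
rewrite inE => /sqdist_eq0P xjE; rewrite -sqdist_corner.
by apply: eq_bigr => k _; rewrite xjE.
Qed.

Lemma at_corner_uniq j y y' : j \in at_corner y -> j \in at_corner y' -> y = y'.
Proof.
move=> jy; rewrite inE (sqdist_at_corner _ jy) pnatr_eq0 hamming_eq0.
by move/eqP.
Qed.

Lemma Xmin_at_corner j y : j \in at_corner y -> Xmin x y = at_corner y.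
Proof.
rewrite inE => /eqP j0; apply/setP => i; rewrite !inE.
apply/forallP/idP => [/(_ j)|/eqP i0 k]; last by rewrite dist_le i0 sqdist_ge0.
by rewrite dist_le j0 eq_le sqdist_ge0 andbT.
Qed.

Lemma sum_card_at_corner : (\sum_y #|at_corner y| <= n)%N.
Proof.
have once j : (\sum_y (j \in at_corner y) <= 1)%N.
  rewrite -big_mkcond sum1_card; apply/card_le1_eqP => y y' jy jy'.
  exact: at_corner_uniq jy' jy.
apply: (@leq_trans (\sum_(j < n) 1)); last by rewrite sum1_card card_ord.
under eq_bigr do rewrite -sum1_card big_mkcond /=.
by rewrite exchange_big; apply: leq_sum => j _; apply: once.
Qed.

End Occupancy.

Section Shares.
Variables (R : realType) (m n : nat) (Q : outcome m -> R).
Hypothesis Q_ge0 : forall y, 0 <= Q y.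
Implicit Types (x : 'I_n -> 'I_m -> R) (y : outcome m).

Definition share x i y : R := Q y * ((i \in Xmin x y)%:R / (#|Xmin x y|)%:R).

Lemma share_ge0 x i y : 0 <= share x i y.
Proof. by rewrite mulr_ge0 // divr_ge0. Qed.

Lemma share_le_utility x i y : share x i y <= utility Q x i.
Proof.
rewrite /utility (bigD1 y) //= lerDl.
by apply: sumr_ge0 => y' _; apply: share_ge0.
Qed.

Lemma share2_le_utility x i y y' :
  y != y' -> share x i y + share x i y' <= utility Q x i.
Proof.
move=> yy'; rewrite /utility (bigD1 y) //= (bigD1 y') 1?eq_sym //= addrA lerDl.
by apply: sumr_ge0 => y'' _; apply: share_ge0.
Qed.

Lemma share_ge x i y c :
  i \in Xmin x y -> (#|Xmin x y| <= c.+1)%N -> Q y / (c.+1)%:R <= share x i y.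
Proof.
move=> iy Xc; rewrite /share iy mul1r.
by apply: ler_pdivn2l => //; apply/card_gt0P; exists i.
Qed.

Lemma sum_utility_le x : \sum_i utility Q x i <= \sum_y Q y.
Proof.
rewrite /utility exchange_big /=; apply: ler_sum => y _.
rewrite -mulr_sumr -mulr_suml ler_piMr //.
have -> : \sum_i (i \in Xmin x y)%:R = #|Xmin x y|%:R :> R.
  by rewrite -sum1_card natr_sum [RHS]big_mkcond; apply: eq_bigr => i _; case: (_ \in _).
by have [->|X_gt0] := posnP #|Xmin x y|; rewrite ?mul0r // divff // pnatr_eq0 -lt0n.
Qed.

Lemma exists_utility_le_inv x : (0 < n)%N -> \sum_y Q y = 1 ->
  exists i, utility Q x i <= n%:R^-1.
Proof.
move=> n_gt0 Q1.
have [/existsP //|/existsPn big_utility] := boolP [exists i, utility Q x i <= n%:R^-1].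
have : \sum_(i < n) n%:R^-1 < \sum_i utility Q x i.
  apply: ltr_sum => [|i _]; last by rewrite ltNge big_utility.
  by apply/hasP; exists (Ordinal n_gt0); rewrite ?mem_index_enum.
rewrite sumr_const card_ord -[_ *+ n]mulr_natr mulVf ?pnatr_eq0 -?lt0n //.
by rewrite -Q1 ltNge sum_utility_le.
Qed.

Lemma deviate_corner_share x k y' y :
  (forall j, j != k -> (hamming y' y)%:R <= sqdist (x j) y) ->
  Q y / (#|[set j | (j != k) && (sqdist (x j) y <= (hamming y' y)%:R)]|.+1)%:R
    <= share (deviate x k (corner y')) k y.
Proof.
set x' := deviate x k (corner y') => far.
have x'k : sqdist (x' k) y = (hamming y' y)%:R by rewrite /x' /deviate eqxx sqdist_corner.
have x'j j : j != k -> x' j = x j by rewrite /x' /deviate => /negbTE ->.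
apply: share_ge.
  rewrite inE; apply/forallP => j; rewrite dist_le x'k.
  by have [->|jk] := eqVneq j k; [rewrite x'k | rewrite x'j ?far].
rewrite -add1n -(cards1 k); apply: leq_trans (leq_card_setU _ _).
apply/subset_leq_card/subsetP => j; rewrite !inE => /forallP/(_ k).
by rewrite dist_le x'k; have [//|jk] := eqVneq j k; rewrite x'j.
Qed.

Lemma deviate_corner_share_self x k y :
  Q y / (#|at_corner x y :\ k|.+1)%:R <= share (deviate x k (corner y)) k y.
Proof.
have -> : at_corner x y :\ k = [set j | (j != k) && (sqdist (x j) y <= (hamming y y)%:R)].
  by apply/setP => j; rewrite !inE hammingxx [_ == 0]eq_le sqdist_ge0 andbT.
by apply: deviate_corner_share => j _; rewrite hammingxx sqdist_ge0.
Qed.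

End Shares.

Section Equilibrium.
Variables (R : realType) (m n : nat) (Q : outcome m -> R) (x : 'I_n -> 'I_m -> R).
Hypotheses (Q_distr : is_distr Q) (n_gt0 : (0 < n)%N)
  (Q_gt : forall y, n%:R^-1 < Q y) (x_NE : pure_NE Q x).
Implicit Types (y : outcome m).

Let Q_ge0 : forall y, 0 <= Q y. Proof. by case: Q_distr. Qed.

Lemma NE_deviation_ge i y : Q y / (#|at_corner x y :\ i|.+1)%:R <= utility Q x i.
Proof.
apply: le_trans (deviate_corner_share_self Q_ge0 x i y) _.
apply: le_trans (share_le_utility Q_ge0 _ i y) _.
exact: x_NE.2 i _ (in_cube_corner y).
Qed.

Lemma NE_at_corner_gt0 y : (0 < #|at_corner x y|)%N.
Proof.
have [i i_low] := exists_utility_le_inv Q_ge0 x n_gt0 Q_distr.2.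
rewrite lt0n cards_eq0; apply/negP => /eqP empty.
have := NE_deviation_ge i y; rewrite empty set0D cards0 divr1 => Qy_le.
by have := lt_le_trans (Q_gt y) (le_trans Qy_le i_low); rewrite ltxx.
Qed.

Lemma NE_Xmin y : Xmin x y = at_corner x y.
Proof. by have /card_gt0P[j jy] := NE_at_corner_gt0 y; apply: Xmin_at_corner jy. Qed.

Lemma NE_on_corner j : exists y, j \in at_corner x y.
Proof.
have [/existsP //|/existsPn nowhere] := boolP [exists y, j \in at_corner x y].
have u0 : utility Q x j = 0.
  by apply: big1 => y _; rewrite NE_Xmin (negbTE (nowhere y)) mul0r mulr0.
have := NE_deviation_ge j [ffun=> false]; rewrite u0 leNgt divr_gt0 //.
by apply: le_lt_trans (Q_gt _); rewrite invr_ge0.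
Qed.

Lemma NE_utility j y : j \in at_corner x y -> utility Q x j = Q y / #|at_corner x y|%:R.
Proof.
move=> jy; rewrite /utility (bigD1 y) //= big1 => [|y' y'y].
  by rewrite NE_Xmin jy mul1r addr0.
rewrite NE_Xmin; have [jy'|_] := boolP (j \in at_corner x y'); last by rewrite mul0r mulr0.
by rewrite (at_corner_uniq jy jy') eqxx in y'y.
Qed.

Lemma NE_stable j y : Q y / (#|at_corner x y|.+1)%:R <= utility Q x j.
Proof.
apply: le_trans (NE_deviation_ge j y); apply: ler_pdivn2l => //.
by rewrite ltnS subset_leq_card // subsetDl.
Qed.

End Equilibrium.

Definition bits (b0 b1 : bool) : outcome 2 := [ffun k : 'I_2 => if k == ord0 then b0 else b1].

Notation o00 := (bits false false).
Notation o01 := (bits false true).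
Notation o10 := (bits true false).
Notation o11 := (bits true true).

Lemma bitsE b0 b1 : (bits b0 b1 ord0 = b0) * (bits b0 b1 ord_max = b1).
Proof. by rewrite !ffunE. Qed.

Lemma bits_eta (y : outcome 2) : y = bits (y ord0) (y ord_max).
Proof.
by apply/ffunP => -[[|[|k]] lt_k2] //; rewrite ffunE; congr (y _); apply: val_inj.
Qed.

Lemma bits_eq a b c d : (bits a b == bits c d) = (a == c) && (b == d).
Proof.
apply/eqP/andP => [ab_cd|[/eqP-> /eqP->] //]; split; apply/eqP.
  by have := congr1 (fun y : outcome 2 => y ord0) ab_cd; rewrite !bitsE.
by have := congr1 (fun y : outcome 2 => y ord_max) ab_cd; rewrite !bitsE.
Qed.

Lemma hamming2 (y y' : outcome 2) :
  hamming y y' = ((y ord0 != y' ord0) + (y ord_max != y' ord_max))%N.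
Proof.
rewrite /hamming !big_ord_recr big_ord0.
by rewrite (_ : widen_ord _ ord_max = ord0) //; apply: val_inj.
Qed.

Lemma big_outcome2 (T : Type) (idx : T) (op : Monoid.com_law idx) (F : outcome 2 -> T) :
  \big[op/idx]_y F y = op (op (F o11) (F o10)) (op (F o01) (F o00)).
Proof.
rewrite (reindex (fun b : bool * bool => bits b.1 b.2)) /=.
  by rewrite -(pair_big xpredT xpredT (fun a b => F (bits a b))) /= !big_bool.
exists (fun y : outcome 2 => (y ord0, y ord_max)) => [[a b] _|y _] /=.
  by rewrite !bitsE.
by rewrite -bits_eta.
Qed.

Lemma hamming_o00_le1 (y : outcome 2) :
  y != o00 -> (hamming y o00 <= 1)%N -> (y == o01) || (y == o10).
Proof. by rewrite [y]bits_eta hamming2 !bitsE !bits_eq; case: (y ord0); case: (y ord_max). Qed.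

Section TwoEvents.
Variables (R : realType) (n : nat) (Q : outcome 2 -> R) (x : 'I_n -> 'I_2 -> R).
Hypotheses (Q_distr : is_distr Q) (n_gt0 : (0 < n)%N) (Q_gt : forall y, n%:R^-1 < Q y)
  (Q_heavy : forall y, y != o11 -> Q y * (n%:R - 3) < 2 * Q o11)
  (Q_bonus : Q o00 < Q o01 / 2 + Q o00 / 3)
  (x_NE : pure_NE Q x).

Let Q_ge0 : forall y, 0 <= Q y. Proof. by case: Q_distr. Qed.
Let occupied := NE_at_corner_gt0 Q_distr n_gt0 Q_gt x_NE.
Let utilityE := NE_utility Q_distr n_gt0 Q_gt x_NE.
Let stable := NE_stable Q_distr x_NE.
Let on_corner := NE_on_corner Q_distr n_gt0 Q_gt x_NE.

Lemma NE_light_card1 y : y != o11 -> #|at_corner x y| = 1%N.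
Proof.
move=> y_light; apply/eqP; rewrite eqn_leq occupied andbT leqNgt; apply/negP => crowded.
have [k ky] := card_gt0P (occupied y).
have h_le : (#|at_corner x o11| + 4 <= n)%N.
  have := sum_card_at_corner x; rewrite big_outcome2.
  have := occupied o00; have := occupied o01; have := occupied o10.
  move: y_light crowded; rewrite [y]bits_eta bits_eq.
  by case: (y ord0); case: (y ord_max) => //= *; lia.
have : Q o11 / #|at_corner x o11|.+1%:R <= Q y / 2%:R.
  by apply: le_trans (stable k o11) _; rewrite (utilityE ky) ler_pdivn2l.
rewrite ler_pdivrMr ?ltr0n // mulrAC ler_pdivlMr ?ltr0n //.
have : (#|at_corner x o11|.+1%:R <= n%:R - 3 :> R) by rewrite lerBrDr -natrD ler_nat; lia.
have := Q_heavy y_light; have := Q_ge0 y; nra.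
Qed.

Lemma NE_two_events_absurd : False.
Proof.
have [c00 c01 c10] : [/\ #|at_corner x o00| = 1, #|at_corner x o01| = 1
    & #|at_corner x o10| = 1]%N by split; apply: NE_light_card1; rewrite bits_eq.
have /cards1P[k Ek] := introT eqP c00.
have k00 : k \in at_corner x o00 by rewrite Ek set11.
have away j : j != k -> exists2 y, y != o00 & j \in at_corner x y.
  move=> jk; have [y jy] := on_corner j; exists y => //.
  by apply: contraNneq jk => y00; move: jy; rewrite y00 Ek inE => /eqP->.
set x' := deviate x k (corner o01).
have gain01 : Q o01 / 2%:R <= share Q x' k o01.
  apply: le_trans (deviate_corner_share_self Q_ge0 x k o01); apply: ler_pdivn2l => //.
  by rewrite ltnS (leq_trans (subset_leq_card (subsetDl _ _))) ?c01.
have gain00 : Q o00 / 3%:R <= share Q x' k o00.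
  have h0100 : hamming o01 o00 = 1%N by rewrite hamming2 !bitsE.
  have far j : j != k -> (hamming o01 o00)%:R <= sqdist (x j) o00.
    by move=> /away[y y00 jy]; rewrite (sqdist_at_corner _ jy) h0100 ler1n lt0n hamming_eq0.
  apply: le_trans (deviate_corner_share Q_ge0 far).
  apply: ler_pdivn2l => //; rewrite ltnS.
  apply: (@leq_trans #|at_corner x o01 :|: at_corner x o10|).
    apply/subset_leq_card/subsetP => j.
    rewrite inE h0100 => /andP[/away[y y00 jy]]; rewrite (sqdist_at_corner _ jy) ler_nat.
    by move=> /(hamming_o00_le1 y00)/orP[]/eqP y_eq; rewrite in_setU -y_eq jy ?orbT.
  by rewrite (leq_trans (leq_card_setU _ _)) // c01 c10.
have o01_o00 : o01 != o00 by rewrite bits_eq.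
have := share2_le_utility Q_ge0 x' k o01_o00.
have : utility Q x' k <= utility Q x k := x_NE.2 k _ (in_cube_corner o01).
rewrite (utilityE k00) c00 divr1.
have := Q_bonus; lra.
Qed.

End TwoEvents.

Section Counterexample.
Variable R : realType.

(* [u] stands for 1/n.  The outcomes o00 and o10 get the minimal mass p, and the
   remaining 1 - 2p is split between o01 and o11 in proportion 2u : 1 - 2u. *)
Definition counterexample (eps u : R) (y : outcome 2) : R :=
  let p := (2 - eps) * u in
  if y ord_max then (if y ord0 then (1 - 2 * u) * (1 - 2 * p) else 2 * (1 - 2 * p) * u)
  else p.

Variables (eps u : R).
Local Notation Q := (counterexample eps u).

Lemma light_mass_small (eps_gt : 1 / 2 < eps) (u_gt0 : 0 < u)
  (u_small : 12 * u < 2 * eps - 1) : 6 * ((2 - eps) * u) < 2 * eps - 1.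
Proof. have eps_u : 0 < eps * u by rewrite mulr_gt0 //; lra. lra. Qed.

Lemma counterexample_gt (eps_gt : 1 / 2 < eps) (eps_lt1 : eps < 1) (u_gt0 : 0 < u)
  (u_small : 12 * u < 2 * eps - 1) y : u < Q y.
Proof.
have := light_mass_small eps_gt u_gt0 u_small.
rewrite /counterexample; case: (y ord_max); case: (y ord0) => *; nra.
Qed.

Lemma counterexample_distr (eps_gt : 1 / 2 < eps) (eps_lt1 : eps < 1) (u_gt0 : 0 < u)
  (u_small : 12 * u < 2 * eps - 1) : is_distr Q.
Proof.
split=> [y|]; first exact/ltW/(lt_trans u_gt0)/counterexample_gt.
by rewrite big_outcome2 /= /counterexample !bitsE; ring.
Qed.

Lemma counterexample_p0 (eps_gt : 1 / 2 < eps) (eps_lt1 : eps < 1) (u_gt0 : 0 < u)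
  (u_small : 12 * u < 2 * eps - 1) : p0 Q = (2 - eps) * u.
Proof.
rewrite (p0_eq_min (y0 := o00)) => [|y]; rewrite /counterexample !bitsE //.
have := light_mass_small eps_gt u_gt0 u_small.
by case: (y ord_max); case: (y ord0) => * //; nra.
Qed.

Lemma counterexample_heavy (eps_gt : 1 / 2 < eps) (eps_lt1 : eps < 1) (u_gt0 : 0 < u)
  (u_small : 12 * u < 2 * eps - 1) y : y != o11 -> Q y * (u^-1 - 3) < 2 * Q o11.
Proof.
have scale v : v * u * (u^-1 - 3) = v * (1 - 3 * u) by field; rewrite gt_eqF.
have := light_mass_small eps_gt u_gt0 u_small.
rewrite [y]bits_eta bits_eq /counterexample !bitsE.
by case: (y ord_max); case: (y ord0) => //= *; rewrite scale; nra.
Qed.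

Lemma counterexample_bonus (eps_gt : 1 / 2 < eps) (u_gt0 : 0 < u)
  (u_small : 12 * u < 2 * eps - 1) : Q o00 < Q o01 / 2 + Q o00 / 3.
Proof.
have := light_mass_small eps_gt u_gt0 u_small.
rewrite /counterexample !bitsE; nra.
Qed.

End Counterexample.

Theorem lemma4 (R : realType) (eps : R) :
  1 / 2 < eps < 1 ->
  exists (m n : nat) (Q : outcome m -> R),
    (0 < n)%N /\ is_distr Q /\ p0 Q = (2 - eps) / n%:R /\
    ~ (exists x : 'I_n -> 'I_m -> R, pure_NE Q x).
Proof.
move=> /andP[eps_gt eps_lt1].
have ratio_ge0 : 0 <= 12 / (2 * eps - 1) by rewrite divr_ge0 //; lra.
have [n n_large] : exists n : nat, 12 / (2 * eps - 1) < n%:R.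
  by exists (Num.Def.archi_bound (12 / (2 * eps - 1))); apply: archi_boundP.
have n_gt0 : (0 < n)%N by rewrite -(ltr0n R); apply: le_lt_trans n_large.
have u_gt0 : 0 < n%:R^-1 :> R by rewrite invr_gt0 ltr0n.
have u_small : 12 * n%:R^-1 < 2 * eps - 1.
  by move: n_large; rewrite !ltr_pdivrMr ?ltr0n //; lra.
have Q_distr := counterexample_distr eps_gt eps_lt1 u_gt0 u_small.
have Q_heavy := counterexample_heavy eps_gt eps_lt1 u_gt0 u_small.
rewrite invrK in Q_heavy.
exists 2%N, n, (counterexample eps n%:R^-1).
split; [exact: n_gt0 | split; [exact: Q_distr | split]].
  exact: counterexample_p0.
move=> [x x_NE]; apply: (NE_two_events_absurd Q_distr n_gt0 _ Q_heavy _ x_NE).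
  exact: counterexample_gt.
exact: counterexample_bonus.
Qed.
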